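(* Let $n\ge 1$, $A\in\mathbb{R}^{n\times n}$ and $C\in\mathbb{R}^{1\times n}$, with $(A,C)$ an observable pair and all eigenvalues of $A$ nonzero. If all eigenvalues of $A$ are positive real numbers, then for any $n$ distinct nonnegative integers $t_1,\ldots,t_n$, the matrix with rows $CA^{t_1},\ldots,CA^{t_n}$ has rank $n$.
   Context: Setting: discrete-time single-output system $x(t+1)=Ax(t)+Bu(t)$, $y(t)=Cx(t)+Du(t)$ with output measured at selected time instances; the matrix with rows $CA^{t_i}$ is the sample-based observability matrix. $(A,C)$ observable means the matrix with rows $C,CA,\ldots,CA^{n-1}$ has rank $n$. *)

From mathcomp Require Import all_boot all_order all_algebra.
From mathcomp Require Import complex.
Set Implicit Arguments. Unset Strict Implicit. Unset Printing Implicit Defensive.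
Import Order.TTheory GRing.Theory Num.Theory.
Local Open Scope ring_scope.

Definition sample_obs_mx (R : comNzRingType) (n m : nat)
    (A : 'M[R]_n) (C : 'rV[R]_n) (t : 'I_m -> nat) : 'M[R]_(m, n) :=
  \matrix_(i < m, j < n) (C *m A ^+ t i) 0 j.

Definition obs_mx (R : comNzRingType) (n : nat) (A : 'M[R]_n) (C : 'rV[R]_n)
  : 'M[R]_(n, n) := sample_obs_mx A C (fun i : 'I_n => nat_of_ord i).

Definition observable (R : fieldType) (n : nat) (A : 'M[R]_n) (C : 'rV[R]_n) :=
  \rank (obs_mx A C) = n.

Definition ceigenvalue (R : rcfType) (n : nat) (A : 'M[R]_n) (z : R[i]) :=
  root (char_poly (map_mx (real_complex R) A)) z.

From mathcomp Require Import all_boot all_order all_algebra.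
From mathcomp Require Import complex.
From mathcomp Require Import ring.
Set Implicit Arguments.
Unset Strict Implicit.
Unset Printing Implicit Defensive.

Import Order.TTheory GRing.Theory Num.Theory.
Local Open Scope ring_scope.

(* If the sample-based observability matrix were singular, a nonzero row
   vector c would give the polynomial F = sum_i c_i X^(t_i), with at most n
   nonzero coefficients, such that C F(A) = 0.  Reducing F modulo the
   characteristic polynomial p of A and using Cayley-Hamilton together with
   observability shows that p divides F.  But p has n positive roots, and
   multiplying by X - l with l > 0 adds a sign change to the coefficient
   sequence (Descartes' rule of signs), so F has at least n sign changes,
   hence at least n + 1 nonzero coefficients. *)

Section SignChanges.
Variable R : realDomainType.
Implicit Types (p q g G : {poly R}) (c l : R).

Definition sign_step p (i j : nat) := (i < j)%N && (p`_i * p`_j < 0).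

Definition has_sign_changes p (m : nat) :=
  exists k ks, [/\ p`_k != 0, path (sign_step p) k ks & size ks = m].

Lemma has_sign_changes_sg p q m :
  (forall k, Num.sg p`_k = Num.sg q`_k) -> has_sign_changes p m -> has_sign_changes q m.
Proof.
move=> pq [k [ks [pk_nz pks size_ks]]]; exists k, ks; split=> //.
  by rewrite -sgr_eq0 -pq sgr_eq0.
apply: sub_path pks => i j /andP [ij]; rewrite /sign_step ij /=.
by rewrite -sgr_lt0 sgrM !pq -sgrM sgr_lt0.
Qed.

Lemma has_sign_changes_support p m (S : seq nat) :
  has_sign_changes p m -> (forall k, p`_k != 0 -> k \in S) -> (m < size S)%N.
Proof.
move=> [k [ks [pk_nz pks <-]]] supp.
have nz_ks : all (fun j => p`_j != 0) (k :: ks).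
  elim: ks k pk_nz pks => [|j ks IH] k pk_nz /= => [|/andP [/andP [_ pkj] pks]].
    by rewrite pk_nz.
  rewrite pk_nz; apply: IH pks.
  by apply: contraTneq pkj => ->; rewrite mulr0 ltxx.
have sorted_ks : sorted ltn (k :: ks) by apply: sub_path pks => i j /andP [].
apply: (uniq_leq_size (sorted_uniq ltn_trans ltnn sorted_ks)) => j kj.
by apply: supp; apply: (allP nz_ks).
Qed.

Lemma exists_pos_summand (F : nat -> R) a b :
  0 < \sum_(a <= j < b) F j -> exists2 j, (a <= j < b)%N & 0 < F j.
Proof.
have [/hasP [j] | /hasPn F_le0] := boolP (has (fun j => 0 < F j) (index_iota a b)).
  by rewrite mem_index_iota; exists j.
by rewrite big_seq ltNge sumr_le0 // => j /F_le0; rewrite -leNgt.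
Qed.

Lemma coef_mulXsubC c G k :
  (('X - c%:P) * G)`_k = (if k is k'.+1 then G`_k' else 0) - c * G`_k.
Proof. by rewrite mulrBl coefB coefXM coefCM; case: k. Qed.

Lemma sum_coef_mulXsub1 G b : \sum_(0 <= j < b.+1) (('X - 1%:P) * G)`_j = - G`_b.
Proof.
elim: b => [|b IH]; first by rewrite big_nat1 coef_mulXsubC mul1r sub0r.
by rewrite big_nat_recr //= IH coef_mulXsubC mul1r addrA addNr sub0r.
Qed.

Lemma sum_coef_mulXsub1_nat G a b : (a <= b)%N ->
  \sum_(a.+1 <= j < b.+1) (('X - 1%:P) * G)`_j = G`_a - G`_b.
Proof.
move=> ab; apply: (addrI (- G`_a)).
by rewrite addKr -!sum_coef_mulXsub1 -big_cat_nat.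
Qed.

Lemma mulr_self_gt0 (x : R) : x != 0 -> 0 < x * x.
Proof. by move=> x_nz; rewrite -expr2 exprn_even_gt0 //= x_nz. Qed.

Lemma mulr_lt0_sign_agree (a b x y : R) :
  0 < a * x -> 0 < b * y -> a * b < 0 -> x * y < 0.
Proof.
move=> ax by_ ab; have := mulr_gt0 ax by_.
by rewrite mulrACA (nmulr_rgt0 _ ab).
Qed.

(* The coefficients of (X - 1) G over the block (k, k'] sum to G_k - G_k',
   which has the sign of G_k when G_k and G_k' have opposite signs, so some
   coefficient in the block has that sign; the last block is (k, size G]. *)
Lemma path_sign_step_mulXsub1 G k ks :
  G`_k != 0 -> path (sign_step G) k ks ->
  exists j js, [/\ (k < j)%N, 0 < G`_k * (('X - 1%:P) * G)`_j,
    path (sign_step (('X - 1%:P) * G)) j js & size js = size ks].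
Proof.
set h := ('X - 1%:P) * G.
elim: ks k => [|k' ks IH] k Gk_nz /=.
  move=> _; have k_lt_size : (k < size G)%N.
    by rewrite ltnNge; apply: contra Gk_nz => /(nth_default 0) ->.
  have : 0 < G`_k * \sum_(k.+1 <= j < (size G).+1) h`_j.
    rewrite sum_coef_mulXsub1_nat; last exact: ltnW.
    by rewrite (nth_default 0 (leqnn (size G))) subr0 mulr_self_gt0.
  by rewrite mulr_sumr => /exists_pos_summand [j /andP [kj _] pos]; exists j, [::].
move=> /andP [/andP [kk' Gkk'] pk'].
have Gk'_nz : G`_k' != 0 by apply: contraTneq Gkk' => ->; rewrite mulr0 ltxx.
have : 0 < G`_k * \sum_(k.+1 <= j < k'.+1) h`_j.
  rewrite sum_coef_mulXsub1_nat; last exact: ltnW.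
  by rewrite mulrBr subr_gt0 (lt_trans Gkk') ?mulr_self_gt0.
rewrite mulr_sumr => /exists_pos_summand [j /andP [kj jk'] pos].
have [j' [js [k'j' pos' pj' <-]]] := IH k' Gk'_nz pk'.
exists j, (j' :: js); split=> //=.
rewrite pj' andbT /sign_step (leq_ltn_trans (jk' : (j <= k')%N) k'j').
exact: mulr_lt0_sign_agree pos pos' Gkk'.
Qed.

Lemma has_sign_changes_mulXsub1 G m :
  has_sign_changes G m -> has_sign_changes (('X - 1%:P) * G) m.+1.
Proof.
set h := ('X - 1%:P) * G; move=> [k [ks [Gk_nz pks <-]]].
have [j [js [kj pos pjs <-]]] := path_sign_step_mulXsub1 Gk_nz pks.
have : 0 < - G`_k * \sum_(0 <= i < k.+1) h`_i.
  by rewrite sum_coef_mulXsub1 mulrNN mulr_self_gt0.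
rewrite mulr_sumr => /exists_pos_summand [i /andP [_ ik] pos_i].
exists i, (j :: js); split=> //=.
  by apply: contraTneq pos_i => ->; rewrite mulr0 ltxx.
rewrite pjs andbT /sign_step (leq_ltn_trans (ik : (i <= k)%N) kj).
by apply: mulr_lt0_sign_agree pos_i pos _; rewrite mulNr oppr_lt0 mulr_self_gt0.
Qed.

Lemma has_sign_changes_nz p : p != 0 -> has_sign_changes p 0.
Proof. by move=> p_nz; exists (size p).-1, [::]; rewrite -lead_coefE lead_coef_eq0. Qed.

(* With G_k = g_k l^k, the identity ((X - l) g)_k l^k = l ((X - 1) G)_k
   reduces the claim to l = 1, as positive factors preserve signs. *)
Lemma has_sign_changes_mulXsubC g l m : 0 < l ->
  has_sign_changes g m -> has_sign_changes (('X - l%:P) * g) m.+1.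
Proof.
move=> l_gt0 g_m; pose G := \poly_(k < size g) (g`_k * l ^+ k).
have coefG k : G`_k = g`_k * l ^+ k.
  rewrite coef_poly; case: ltnP => // /(nth_default 0) ->.
  by rewrite mul0r.
have sg_powl x k : Num.sg (x * l ^+ k) = Num.sg x.
  by rewrite sgrM (gtr0_sg (exprn_gt0 k l_gt0)) mulr1.
have scaled k : (('X - l%:P) * g)`_k * l ^+ k = l * (('X - 1%:P) * G)`_k.
  by case: k => [|k]; rewrite !coef_mulXsubC !coefG ?exprS; ring.
apply: (@has_sign_changes_sg (('X - 1%:P) * G)) => [k|].
  by rewrite -(sg_powl (('X - l%:P) * g)`_k k) scaled sgrM (gtr0_sg l_gt0) mul1r.
apply/has_sign_changes_mulXsub1/(has_sign_changes_sg _ g_m) => k.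
by rewrite coefG sg_powl.
Qed.
End SignChanges.

Section PositiveRoots.
Variable R : rcfType.
Implicit Types q g : {poly R}.

Definition has_only_positive_roots q :=
  forall z : R[i], root (map_poly (real_complex R) q) z -> 0 < z.

Lemma exists_positive_root q : (1 < size q)%N -> has_only_positive_roots q ->
  exists2 l, 0 < l & root q l.
Proof.
move=> size_q q_pos.
have : size (map_poly (real_complex R) q) != 1%N by rewrite size_map_poly gtn_eqF.
case/closed_rootP => z qz; have := q_pos z qz.
rewrite ltcE => /andP [/eqP Imz Rez]; exists (complex.Re z) => //.
have zE : z = real_complex R (complex.Re z) by case: z Imz {qz Rez} => a b /= ->.
by move: qz; rewrite zE fmorph_root.
Qed.

Lemma has_sign_changes_mul_positive_roots g d q : g != 0 -> size q = d.+1 ->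
  has_only_positive_roots q -> has_sign_changes (q * g) d.
Proof.
move=> g_nz; elim: d q => [|d IH] q size_q q_pos.
  by apply/has_sign_changes_nz/mulf_neq0; rewrite // -size_poly_gt0 size_q.
have [l l_gt0 /factor_theorem [q' qE]] : exists2 l, 0 < l & root q l.
  by apply: exists_positive_root q_pos; rewrite size_q.
have size_q' : size q' = d.+1.
  move: size_q; rewrite qE; have [->|q'_nz] := eqVneq q' 0.
    by rewrite mul0r size_poly0.
  by rewrite size_Mmonic ?monicXsubC // size_XsubC addn2 => -[].
have q'_pos : has_only_positive_roots q'.
  by move=> z q'z; apply: q_pos; rewrite qE rmorphM rootM q'z.
rewrite qE [q' * _]mulrC -mulrA.
exact: has_sign_changes_mulXsubC l_gt0 (IH _ size_q' q'_pos).
Qed.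
End PositiveRoots.

Definition sparse_poly (R : nzRingType) m (c : 'rV[R]_m) (t : 'I_m -> nat) : {poly R} :=
  \sum_(i < m) c 0 i *: 'X^(t i).

Section SparsePoly.
Variables (R : nzRingType) (m : nat) (c : 'rV[R]_m) (t : 'I_m -> nat).

Lemma coef_sparse_poly k : (sparse_poly c t)`_k = \sum_(i | t i == k) c 0 i.
Proof.
rewrite coef_sum [RHS]big_mkcond; apply: eq_bigr => i _.
by rewrite coefZ coefXn eq_sym; case: eqP; rewrite ?mulr1 ?mulr0.
Qed.

Lemma sparse_poly_support k : (sparse_poly c t)`_k != 0 -> k \in codom t.
Proof.
move=> nz; apply/codomP; have [i /eqP <-|none] := pickP (fun i => t i == k).
  by exists i.
by move: nz; rewrite coef_sparse_poly big_pred0 ?eqxx.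
Qed.

Hypothesis t_inj : injective t.

Lemma coef_sparse_poly_inj i : (sparse_poly c t)`_(t i) = c 0 i.
Proof. by rewrite coef_sparse_poly (big_pred1 i) // => j; apply: inj_eq. Qed.

Lemma sparse_poly_eq0 : (sparse_poly c t == 0) = (c == 0).
Proof.
apply/eqP/eqP => [F0|->]; last first.
  by rewrite /sparse_poly big1 // => i _; rewrite mxE scale0r.
by apply/rowP => i; rewrite -coef_sparse_poly_inj F0 coef0 mxE.
Qed.

End SparsePoly.

Lemma mul_sample_obs_mx (R : comNzRingType) n m (A : 'M[R]_n.+1) (C : 'rV_n.+1)
    (t : 'I_m -> nat) (c : 'rV_m) :
  c *m sample_obs_mx A C t = C *m horner_mx A (sparse_poly c t).
Proof.
rewrite mulmx_sum_row rmorph_sum mulmx_sumr; apply: eq_bigr => i _.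
rewrite /= (horner_mxZ A) rmorphXn /= horner_mx_X -scalemxAr; congr (_ *: _).
by apply/rowP => j; rewrite !mxE.
Qed.

Lemma mul_obs_mx (R : comNzRingType) n (A : 'M[R]_n.+1) (C : 'rV_n.+1) (c : 'rV_n.+1) :
  c *m obs_mx A C = C *m horner_mx A (rVpoly c).
Proof.
rewrite mul_sample_obs_mx /rVpoly poly_def; congr (_ *m horner_mx A _).
by apply: eq_bigr => i _; rewrite valK.
Qed.

Lemma observable_char_poly_dvd (R : fieldType) n (A : 'M[R]_n.+1) (C : 'rV_n.+1)
    (F : {poly R}) :
  observable A C -> C *m horner_mx A F = 0 -> char_poly A %| F.
Proof.
move=> obs CF0; set p := char_poly A; set r := F %% p.
have Cr0 : C *m horner_mx A r = 0.
  by rewrite -CF0 (divp_eq F p) rmorphD rmorphM /= Cayley_Hamilton mulr0 add0r.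
have size_r : (size r <= n.+1)%N.
  by rewrite -ltnS -(size_char_poly A) ltn_modp monic_neq0 // char_poly_monic.
have obs_free : row_free (obs_mx A C) by rewrite /row_free obs.
apply/modp_eq0P; rewrite -/r -(poly_rV_K size_r).
have /eqP : poly_rV r *m obs_mx A C = 0 by rewrite mul_obs_mx poly_rV_K.
by rewrite mulmx_free_eq0 // => /eqP ->; rewrite linear0.
Qed.

Theorem corollary1 (R : rcfType) (n : nat) (A : 'M[R]_n) (C : 'rV[R]_n) :
  (1 <= n)%N ->
  observable A C ->
  (forall z : R[i], ceigenvalue A z -> z != 0) ->
  (forall z : R[i], ceigenvalue A z -> 0 < z) ->
  forall t : 'I_n -> nat, injective t ->
  \rank (sample_obs_mx A C t) = n.
Proof.
case: n A C => [//|n] A C _ obs _ pos t t_inj.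
apply/eqP/inj_row_free => c cS0; apply/eqP/negPn/negP => c_nz.
have F_nz : sparse_poly c t != 0 by rewrite sparse_poly_eq0.
have /dvdpP [g Fg] : char_poly A %| sparse_poly c t.
  by apply: observable_char_poly_dvd obs _; rewrite -mul_sample_obs_mx.
have g_nz : g != 0 by apply: contraNneq F_nz => g0; rewrite Fg g0 mul0r.
have A_pos : has_only_positive_roots (char_poly A).
  by move=> z; rewrite map_char_poly; apply: pos.
have F_changes : has_sign_changes (sparse_poly c t) n.+1.
  rewrite Fg mulrC.
  exact: has_sign_changes_mul_positive_roots g_nz (size_char_poly A) A_pos.
have := has_sign_changes_support F_changes (@sparse_poly_support _ _ c t).
by rewrite size_codom card_ord ltnn.
Qed.
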